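(* For all $x>0$ and $0\le p\le 1$, $$W_p(x,1)\le K(x)^{p(1-p)}\,L(x,1).$$ Equivalently, for all $x,y>0$ and $0\le p\le 1$: $W_p(x,y)\le K(x/y)^{p(1-p)}L(x,y)$.
   Context: $K(x)=\frac{(x+1)^2}{4x}$ (Kantorovich constant) for $x>0$. $L(x,y)=\frac{x-y}{\log x-\log y}$ for $x\ne y$, $L(x,x)=x$. The Wigner--Yanase--Dyson function is $W_p(x,y)=\frac{p(1-p)(x-y)^2}{(x^p-y^p)(x^{1-p}-y^{1-p})}$ for $x\neq y$, $p\notin\{0,1\}$, with $W_p(x,x)=x$, and $W_0=W_1=L$ (limiting values). *)

From Stdlib Require Import Reals.
Open Scope R_scope.

Definition Kant (x : R) : R := (x + 1) ^ 2 / (4 * x).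

Definition Lmean (x y : R) : R :=
  if Req_EM_T x y then x else (x - y) / (ln x - ln y).

Definition WYD (p x y : R) : R :=
  if Req_EM_T p 0 then Lmean x y
  else if Req_EM_T p 1 then Lmean x y
  else if Req_EM_T x y then x
  else p * (1 - p) * (x - y) ^ 2
       / ((Rpower x p - Rpower y p) * (Rpower x (1 - p) - Rpower y (1 - p))).

From Stdlib Require Import Reals Lra Psatz.
From Coquelicot Require Import Coquelicot.
Open Scope R_scope.

(* Write x = exp (2 u) and p = (1 + r) / 2 with u <> 0 and
   -1 < r < 1.  Then K(x)^(p(1-p)) = (cosh u)^((1 - r^2)/2),
   L(x,1) = e^u sinh u / u and
     W_p(x,1) = L(x,1) * (1 - r^2) u sinh u / (2 (cosh u - cosh (r u))),
   so the theorem is equivalent to the hyperbolic inequality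
     (1 - r^2) u sinh u <= 2 (cosh u - cosh (r u)) (cosh u)^((1 - r^2)/2)
   ([wyd_core]), which by parity may be assumed for u > 0, 0 <= r <= 1.
   For fixed u, the difference of the two sides divided by (cosh u)^((1-r^2)/2)
   is nondecreasing in r and vanishes at r = 1; its derivative is nonnegative
   thanks to [sinh_scale_bound]: r sinh u <= sinh (r u) (cosh u)^(1 - r^2).
   The latter says ln r <= log_ratio r u, where log_ratio r u is the logarithm
   of sinh (r u) (cosh u)^(1 - r^2) / sinh u; this function is nondecreasing
   in u (its derivative is an explicit positive combination of sinh's,
   [cubic_gap]) and tends to ln r as u -> 0.
   The file develops, in order: a monotonicity criterion, elementary
   hyperbolic inequalities, the estimates on cubic_gap and log_ratio, the core
   inequality, the change of variables, and finally the theorem. *)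

Lemma le_of_derive_nonneg (f f' : R -> R) (a b : R) : a <= b ->
  (forall t, a <= t <= b -> is_derive f t (f' t)) ->
  (forall t, a <= t <= b -> 0 <= f' t) -> f a <= f b.
Proof.
  intros hab hder hpos.
  destruct (Req_dec a b) as [<- | hne]; [lra |].
  destruct (MVT_cor2 f f' a b) as [c [hmvt hc]]; [lra | |].
  - intros t ht. apply is_derive_Reals, hder. exact ht.
  - assert (0 <= f' c) by (apply hpos; lra). nra.
Qed.

Lemma le_of_ln_le (x y : R) : 0 < x -> 0 < y -> ln x <= ln y -> x <= y.
Proof.
  intros hx hy hle. destruct (Rle_lt_dec x y) as [| hlt]; [assumption |].
  pose proof (ln_increasing y x hy hlt). lra.
Qed.

Lemma cosh_sq_sub_sinh_sq (x : R) : cosh x * cosh x - sinh x * sinh x = 1.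
Proof.
  unfold cosh, sinh. rewrite exp_Ropp. pose proof (exp_pos x). field. lra.
Qed.

(* cosh x >= 1, since cosh x - 1 = (e^x - 1)^2 / (2 e^x). *)
Lemma cosh_ge_1 (x : R) : 1 <= cosh x.
Proof.
  unfold cosh. rewrite exp_Ropp. pose proof (exp_pos x) as hpos.
  assert (e : (exp x + / exp x) / 2 - 1 = (exp x - 1) ^ 2 / (2 * exp x)) by (field; lra).
  assert (0 <= (exp x - 1) ^ 2 / (2 * exp x)).
  { apply Rdiv_le_0_compat; [apply pow2_ge_0 | lra]. }
  lra.
Qed.

Lemma cosh_pos (x : R) : 0 < cosh x.
Proof. pose proof (cosh_ge_1 x). lra. Qed.

Lemma sinh_pos (x : R) : 0 < x -> 0 < sinh x.
Proof. intros hx. rewrite <- sinh_0. apply sinh_lt, hx. Qed.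

Lemma sinh_nonneg (x : R) : 0 <= x -> 0 <= sinh x.
Proof.
  intros [hx | <-]; [left; apply sinh_pos, hx | rewrite sinh_0; lra].
Qed.

Lemma cosh_opp (x : R) : cosh (- x) = cosh x.
Proof. unfold cosh. rewrite Ropp_involutive. lra. Qed.

Lemma sinh_opp (x : R) : sinh (- x) = - sinh x.
Proof. unfold sinh. rewrite Ropp_involutive. lra. Qed.

Lemma cosh_le (a b : R) : 0 <= a <= b -> cosh a <= cosh b.
Proof.
  intros hab. apply (le_of_derive_nonneg cosh sinh); [lra | |].
  - intros t _. unfold cosh, sinh. auto_derive; [exact I | field].
  - intros t ht. apply sinh_nonneg. lra.
Qed.

Lemma sinh_ge_id (z : R) : 0 <= z -> z <= sinh z.
Proof.
  intros hz.
  enough (0 - 0 <= sinh z - z) by lra. rewrite <- sinh_0 at 1.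
  apply (le_of_derive_nonneg (fun v => sinh v - v) (fun v => cosh v - 1)); [lra | |].
  - intros t _. unfold cosh, sinh. auto_derive; [exact I | field].
  - intros t _. pose proof (cosh_ge_1 t). lra.
Qed.

Lemma sinh_le_mul_cosh (z : R) : 0 <= z -> sinh z <= z * cosh z.
Proof.
  intros hz.
  enough (0 * cosh 0 - sinh 0 <= z * cosh z - sinh z) by (rewrite sinh_0 in *; lra).
  apply (le_of_derive_nonneg (fun v => v * cosh v - sinh v) (fun v => v * sinh v));
    [lra | |].
  - intros t _. unfold cosh, sinh. auto_derive; [exact I | field].
  - intros t ht. pose proof (sinh_nonneg t). nra.
Qed.

Lemma cosh_sub_1_le (z : R) : 0 <= z -> cosh z - 1 <= z * sinh z.
Proof.
  intros hz.
  enough (0 * sinh 0 - cosh 0 <= z * sinh z - cosh z) by (rewrite cosh_0 in *; lra).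
  apply (le_of_derive_nonneg (fun v => v * sinh v - cosh v) (fun v => v * cosh v));
    [lra | |].
  - intros t _. unfold cosh, sinh. auto_derive; [exact I | field].
  - intros t ht. pose proof (cosh_pos t). nra.
Qed.

(* 0 <= ln (cosh z) <= z sinh z, using ln y <= y - 1. *)
Lemma ln_cosh_le (z : R) : 0 <= z -> 0 <= ln (cosh z) <= z * sinh z.
Proof.
  intros hz. split.
  - rewrite <- ln_1. apply ln_le; [lra | apply cosh_ge_1].
  - pose proof (exp_ineq1_le (ln (cosh z))) as h.
    rewrite exp_ln in h by apply cosh_pos.
    pose proof (cosh_sub_1_le z hz). lra.
Qed.

(* The numerator of the derivative of [log_ratio] (see [cubic_gap_eq]), written
   as a combination of sinh's whose derivative is visibly nonnegative. *)
Definition cubic_gap (r u : R) : R :=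
  (r - r * r) / 4 * sinh ((2 + r) * u) + (r + r * r) / 4 * sinh ((2 - r) * u)
  - (1 - r * r / 2) * sinh (r * u).

(* cubic_gap r vanishes at 0 and its derivative is a nonnegative
   combination of the differences cosh ((2 +- r) t) - cosh (r t). *)
Lemma cubic_gap_nonneg (r u : R) : 0 <= r <= 1 -> 0 <= u -> 0 <= cubic_gap r u.
Proof.
  intros hr hu.
  replace 0 with (cubic_gap r 0) at 1
    by (unfold cubic_gap; rewrite !Rmult_0_r, sinh_0; ring).
  apply (le_of_derive_nonneg (cubic_gap r)
    (fun t => (r - r * r) * (2 + r) / 4 * (cosh ((2 + r) * t) - cosh (r * t))
            + (r + r * r) * (2 - r) / 4 * (cosh ((2 - r) * t) - cosh (r * t))));
    [lra | |].
  - intros t _. unfold cubic_gap, sinh, cosh. auto_derive; [repeat split | field].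
  - intros t ht.
    assert (cosh (r * t) <= cosh ((2 + r) * t)) by (apply cosh_le; nra).
    assert (cosh (r * t) <= cosh ((2 - r) * t)) by (apply cosh_le; nra).
    assert (0 <= (r - r * r) * (2 + r)) by nra.
    assert (0 <= (r + r * r) * (2 - r)) by nra.
    apply Rplus_le_le_0_compat; apply Rmult_le_pos; lra.
Qed.

(* Product-to-sum expansion of the numerator of the derivative of [log_ratio]. *)
Lemma cubic_gap_eq (r u : R) :
  r * cosh (r * u) * sinh u * cosh u - sinh (r * u) * (1 + r * r * sinh u * sinh u)
  = cubic_gap r u.
Proof.
  unfold cubic_gap.
  assert (e1 : exp ((2 + r) * u) = exp u * exp u * exp (r * u))
    by (rewrite <- !exp_plus; f_equal; ring).
  assert (e2 : exp ((2 - r) * u) = exp u * exp u * / exp (r * u))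
    by (rewrite <- exp_Ropp, <- !exp_plus; f_equal; ring).
  unfold sinh, cosh. rewrite !exp_Ropp, e1, e2.
  pose proof (exp_pos u). pose proof (exp_pos (r * u)).
  field. lra.
Qed.

Definition log_ratio (r v : R) : R :=
  ln (sinh (r * v)) + (1 - r * r) * ln (cosh v) - ln (sinh v).

(* log_ratio r is nondecreasing on (0, +oo): after using
   cosh^2 - sinh^2 = 1, its derivative is cubic_gap r v / (sinh (r v) sinh v cosh v). *)
Lemma log_ratio_mono (r e u : R) : 0 < r <= 1 -> 0 < e <= u ->
  log_ratio r e <= log_ratio r u.
Proof.
  intros hr he.
  apply (le_of_derive_nonneg (log_ratio r)
    (fun v => r * cosh (r * v) / sinh (r * v) + (1 - r * r) * sinh v / cosh v
              - cosh v / sinh v)); [lra | |];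
  intros t ht;
  assert (hsr : 0 < sinh (r * t)) by (apply sinh_pos; nra);
  assert (hs : 0 < sinh t) by (apply sinh_pos; lra);
  pose proof (cosh_pos t) as hc.
  - unfold log_ratio. unfold sinh, cosh in *. auto_derive.
    + repeat split; assumption.
    + field. repeat split; lra.
  -
    replace (r * cosh (r * t) / sinh (r * t) + (1 - r * r) * sinh t / cosh t
             - cosh t / sinh t)
      with (cubic_gap r t / (sinh (r * t) * sinh t * cosh t)).
    + apply Rdiv_le_0_compat; [apply cubic_gap_nonneg; lra |].
      apply Rmult_lt_0_compat; [apply Rmult_lt_0_compat |]; assumption.
    + rewrite <- cubic_gap_eq. pose proof (cosh_sq_sub_sinh_sq t).
      field_simplify_eq; [nra | repeat split; lra].
Qed.

Lemma log_ratio_near_zero (r e : R) : 0 < r <= 1 -> 0 < e ->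
  ln r - e * sinh e <= log_ratio r e.
Proof.
  intros hr he.
  assert (hse : 0 < sinh e) by (apply sinh_pos, he).
  assert (hnum : ln (r * e) <= ln (sinh (r * e)))
    by (apply ln_le; [nra | apply sinh_ge_id; nra]).
  assert (hden : ln (sinh e) <= ln (e * cosh e))
    by (apply ln_le; [exact hse | apply sinh_le_mul_cosh; lra]).
  rewrite ln_mult in hnum, hden by (lra || apply cosh_pos).
  pose proof (ln_cosh_le e (Rlt_le _ _ he)) as [hc0 hc1].
  assert (0 <= (1 - r * r) * ln (cosh e)) by (apply Rmult_le_pos; nra).
  unfold log_ratio. lra.
Qed.

(* Monotonicity plus the behaviour at 0 give log_ratio r u >= ln r. *)
Lemma log_ratio_ge_ln (r u : R) : 0 < r <= 1 -> 0 < u -> ln r <= log_ratio r u.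
Proof.
  intros hr hu. apply Rle_plus_epsilon. intros eps heps.
  assert (hs : 0 < sinh u) by (apply sinh_pos, hu).
  set (e := Rmin u (eps / (sinh u + 1))).
  assert (he : 0 < e) by (apply Rmin_glb_lt; [lra | apply Rdiv_lt_0_compat; lra]).
  assert (heu : e <= u) by apply Rmin_l.
  assert (heps' : e * (sinh u + 1) <= eps).
  { assert (e <= eps / (sinh u + 1)) by apply Rmin_r.
    apply (Rmult_le_compat_r (sinh u + 1)) in H; [| lra].
    unfold Rdiv in H. rewrite Rmult_assoc, Rinv_l in H; lra. }
  assert (hsinh : sinh e <= sinh u).
  { destruct (Req_dec e u) as [-> | hne]; [lra | left; apply sinh_lt; lra]. }
  pose proof (log_ratio_near_zero r e hr he).
  pose proof (log_ratio_mono r e u hr (conj he heu)).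
  nra.
Qed.

Lemma sinh_scale_bound (r u : R) : 0 <= r <= 1 -> 0 < u ->
  r * sinh u <= sinh (r * u) * Rpower (cosh u) (1 - r * r).
Proof.
  intros hr hu.
  destruct (Req_dec r 0) as [-> | hr0].
  { rewrite !Rmult_0_l, sinh_0. lra. }
  assert (hs : 0 < sinh u) by (apply sinh_pos, hu).
  assert (hsr : 0 < sinh (r * u)) by (apply sinh_pos; nra).
  assert (hR : 0 < Rpower (cosh u) (1 - r * r)) by apply exp_pos.
  apply le_of_ln_le; [nra | nra |].
  rewrite !ln_mult, ln_Rpower by lra.
  pose proof (log_ratio_ge_ln r u ltac:(lra) hu). unfold log_ratio in *. lra.
Qed.

(* Sign of the slope used in [wyd_core]: with y = (1 - t^2)/2 ln (cosh u) and
   e = (cosh u)^(-(1-t^2)/2) = exp (-y), the slope equals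
   2 u (sinh (t u) - t sinh u e (1 - y)), and t sinh u e (1 - y) <= t sinh u e^2
   <= sinh (t u) by 1 - y <= exp (-y) and [sinh_scale_bound]. *)
Lemma core_slope_nonneg (u t : R) : 0 < u -> 0 <= t <= 1 ->
  0 <= u * sinh u * Rpower (cosh u) (- ((1 - t * t) / 2))
         * (t * (1 - t * t) * ln (cosh u) - 2 * t)
       + 2 * u * sinh (t * u).
Proof.
  intros hu ht.
  set (s := sinh u). set (c := cosh u). set (L := ln c).
  assert (hs : 0 < s) by (apply sinh_pos, hu).
  assert (hL : 0 <= L) by (apply (ln_cosh_le u); lra).
  set (y := (1 - t * t) / 2 * L).
  assert (hy : 0 <= y) by (apply Rmult_le_pos; nra).
  set (e := Rpower c (- ((1 - t * t) / 2))).
  assert (he_exp : e = exp (- y)) by (unfold e, Rpower, y, L; f_equal; ring).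
  assert (he : 0 < e) by (rewrite he_exp; apply exp_pos).
  assert (h1y : 1 - y <= e) by (rewrite he_exp; pose proof (exp_ineq1_le (- y)); lra).
  assert (hee : e * e * Rpower c (1 - t * t) = 1).
  { unfold e. rewrite <- !Rpower_plus. replace (_ + _ + _) with 0 by field.
    apply Rpower_O, cosh_pos. }
  pose proof (sinh_scale_bound t u ltac:(lra) hu) as hbound. fold s c in hbound.
  assert (hts : 0 <= t * s) by (apply Rmult_le_pos; lra).
  assert (t * s * e * (1 - y) <= t * s * e * e)
    by (apply Rmult_le_compat_l; [apply Rmult_le_pos |]; lra).
  assert (t * s * (e * e) <= sinh (t * u))
    by (rewrite <- (Rmult_1_r (sinh (t * u))), <- hee; nra).
  replace (u * s * e * (t * (1 - t * t) * L - 2 * t) + 2 * u * sinh (t * u))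
    with (2 * u * (sinh (t * u) - t * s * e * (1 - y))) by (unfold y; field).
  apply Rmult_le_pos; lra.
Qed.

(* The core inequality for u > 0 and 0 <= r <= 1.  The function
   F t = (1 - t^2) u sinh u (cosh u)^(-(1-t^2)/2) - 2 (cosh u - cosh (t u))
   vanishes at t = 1 and is nondecreasing on [r, 1] by [core_slope_nonneg];
   multiplying F r <= 0 by (cosh u)^((1-r^2)/2) gives the claim. *)
Lemma wyd_core (u r : R) : 0 < u -> 0 <= r <= 1 ->
  (1 - r * r) * (u * sinh u)
  <= 2 * (cosh u - cosh (r * u)) * Rpower (cosh u) ((1 - r * r) / 2).
Proof.
  intros hu hr.
  set (s := sinh u). set (c := cosh u).
  set (F := fun t => (1 - t * t) * u * s * Rpower c (- ((1 - t * t) / 2))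
                     - 2 * (c - cosh (t * u))).
  assert (hF1 : F 1 = 0).
  { unfold F, c. replace (1 * u) with u by ring. ring. }
  assert (hFr : F r <= F 1).
  { apply (le_of_derive_nonneg F
      (fun t => u * s * Rpower c (- ((1 - t * t) / 2))
                * (t * (1 - t * t) * ln c - 2 * t) + 2 * u * sinh (t * u)));
      [lra | | intros t ht; apply core_slope_nonneg; lra].
    intros t _. unfold F, Rpower, sinh, cosh. auto_derive; [repeat split |].
    change (exp (- ((1 + - (t * t)) * / 2) * ln c))
      with (exp (- ((1 - t * t) / 2) * ln c)).
    field. }
  set (G := Rpower c ((1 - r * r) / 2)).
  assert (hGpos : 0 < G) by apply exp_pos.
  assert (hG : Rpower c (- ((1 - r * r) / 2)) * G = 1)
    by (unfold G in *; rewrite Rpower_Ropp; field; lra).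
  rewrite hF1 in hFr. unfold F in hFr.
  apply (Rmult_le_compat_r G) in hFr; [| lra].
  replace ((1 - r * r) * (u * s))
    with ((1 - r * r) * u * s * (Rpower c (- ((1 - r * r) / 2)) * G))
    by (rewrite hG; ring).
  lra.
Qed.

Lemma cosh_abs (z : R) : cosh (Rabs z) = cosh z.
Proof.
  destruct (Rcase_abs z); [rewrite Rabs_left, cosh_opp | rewrite Rabs_pos_eq]; lra.
Qed.

Lemma mul_sinh_abs (z : R) : Rabs z * sinh (Rabs z) = z * sinh z.
Proof.
  destruct (Rcase_abs z);
    [rewrite Rabs_left, sinh_opp by lra; ring | rewrite Rabs_pos_eq; lra].
Qed.

Lemma mul_sinh_pos (u : R) : u <> 0 -> 0 < u * sinh u.
Proof.
  intros hu. rewrite <- mul_sinh_abs.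
  assert (0 < Rabs u) by (apply Rabs_pos_lt, hu).
  assert (0 < sinh (Rabs u)) by (apply sinh_pos; lra).
  nra.
Qed.

Lemma wyd_core_sym (u r : R) : u <> 0 -> -1 <= r <= 1 ->
  (1 - r * r) * (u * sinh u)
  <= 2 * (cosh u - cosh (r * u)) * Rpower (cosh u) ((1 - r * r) / 2).
Proof.
  intros hu hr.
  pose proof (wyd_core (Rabs u) (Rabs r) ltac:(apply Rabs_pos_lt, hu)
    ltac:(split; [apply Rabs_pos | apply Rabs_le; lra])) as h.
  rewrite <- !Rabs_mult, (Rabs_pos_eq (r * r)), !cosh_abs, mul_sinh_abs in h
    by nra.
  exact h.
Qed.

(* For |r| < 1 and u <> 0, cosh (r u) < cosh u: the core inequality has a
   positive left-hand side. *)
Lemma cosh_gap_pos (u r : R) : u <> 0 -> -1 < r < 1 -> 0 < cosh u - cosh (r * u).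
Proof.
  intros hu hr.
  pose proof (wyd_core_sym u r hu ltac:(lra)) as h.
  pose proof (mul_sinh_pos u hu).
  assert (0 < (1 - r * r) * (u * sinh u)) by (apply Rmult_lt_0_compat; nra).
  assert (0 < Rpower (cosh u) ((1 - r * r) / 2)) by apply exp_pos.
  nra.
Qed.

(* The core inequality in the form used for the theorem: the factor by which
   W exceeds L is at most (cosh u)^((1 - r^2)/2). *)
Lemma wyd_ratio_le (u r : R) : u <> 0 -> -1 < r < 1 ->
  (1 - r * r) * (u * sinh u) / (2 * (cosh u - cosh (r * u)))
  <= Rpower (cosh u) ((1 - r * r) / 2).
Proof.
  intros hu hr.
  pose proof (cosh_gap_pos u r hu hr).
  apply Rle_div_l; [lra |].
  rewrite (Rmult_comm (Rpower _ _)). apply wyd_core_sym; lra.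
Qed.

Lemma Rpower_base_1 (y : R) : Rpower 1 y = 1.
Proof. unfold Rpower. rewrite ln_1, Rmult_0_r. apply exp_0. Qed.

Lemma Lmean_diag (x : R) : Lmean x x = x.
Proof. unfold Lmean. destruct (Req_EM_T x x); [reflexivity | contradiction]. Qed.

Lemma Lmean_pos (x y : R) : 0 < x -> 0 < y -> 0 < Lmean x y.
Proof.
  intros hx hy. unfold Lmean.
  destruct (Req_EM_T x y) as [_ | hne]; [exact hx |].
  destruct (Rlt_or_le x y) as [hlt | hle].
  - pose proof (ln_increasing x y hx hlt).
    apply Rdiv_neg_neg; lra.
  - pose proof (ln_increasing y x hy ltac:(lra)).
    apply Rdiv_lt_0_compat; lra.
Qed.

Lemma WYD_endpoint (p x y : R) : p = 0 \/ p = 1 -> WYD p x y = Lmean x y.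
Proof.
  intros hp. unfold WYD.
  destruct (Req_EM_T p 0); [reflexivity |].
  destruct (Req_EM_T p 1); [reflexivity | lra].
Qed.

Lemma WYD_diag (p x : R) : WYD p x x = x.
Proof.
  unfold WYD.
  destruct (Req_EM_T p 0); [apply Lmean_diag |].
  destruct (Req_EM_T p 1); [apply Lmean_diag |].
  destruct (Req_EM_T x x); [reflexivity | contradiction].
Qed.

Lemma exp_2u_neq_1 (u : R) : u <> 0 -> exp (2 * u) <> 1.
Proof. intros hu he. rewrite <- exp_0 in he. apply exp_inv in he. lra. Qed.

(* K(e^(2u)) = cosh^2 u, hence K(e^(2u))^(p(1-p)) = (cosh u)^((1 - r^2)/2) with
   r = 2p - 1. *)
Lemma Kant_exp (u p : R) :
  Rpower (Kant (exp (2 * u))) (p * (1 - p))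
  = Rpower (cosh u) ((1 - (2 * p - 1) * (2 * p - 1)) / 2).
Proof.
  assert (hK : Kant (exp (2 * u)) = cosh u * cosh u).
  { unfold Kant, cosh. replace (2 * u) with (u + u) by ring.
    rewrite exp_plus, exp_Ropp. pose proof (exp_pos u). field. lra. }
  unfold Rpower. rewrite hK, ln_mult by apply cosh_pos. f_equal. field.
Qed.

Lemma Lmean_exp (u : R) : u <> 0 -> Lmean (exp (2 * u)) 1 = exp u * sinh u / u.
Proof.
  intros hu. unfold Lmean.
  destruct (Req_EM_T (exp (2 * u)) 1) as [he | _]; [now apply exp_2u_neq_1 in he |].
  rewrite ln_exp, ln_1. replace (2 * u) with (u + u) by ring.
  unfold sinh. rewrite exp_plus, exp_Ropp. pose proof (exp_pos u). field. lra.
Qed.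

Lemma WYD_exp (u p : R) : u <> 0 -> 0 < p < 1 ->
  cosh u - cosh ((2 * p - 1) * u) <> 0 ->
  WYD p (exp (2 * u)) 1
  = Lmean (exp (2 * u)) 1
    * ((1 - (2 * p - 1) * (2 * p - 1)) * (u * sinh u)
       / (2 * (cosh u - cosh ((2 * p - 1) * u)))).
Proof.
  intros hu hp hgap.
  rewrite Lmean_exp by exact hu. unfold WYD.
  destruct (Req_EM_T p 0); [lra |]. destruct (Req_EM_T p 1); [lra |].
  destruct (Req_EM_T (exp (2 * u)) 1) as [he | _]; [now apply exp_2u_neq_1 in he |].
  rewrite !Rpower_base_1. unfold Rpower. rewrite ln_exp.
  set (r := 2 * p - 1) in *.
  set (X := exp u). set (Y := exp (r * u)).
  assert (hX : 0 < X) by apply exp_pos. assert (hY : 0 < Y) by apply exp_pos.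
  assert (e1 : exp (2 * u) = X * X) by (unfold X; rewrite <- exp_plus; f_equal; ring).
  assert (e2 : exp (p * (2 * u)) = X * Y)
    by (unfold X, Y, r; rewrite <- exp_plus; f_equal; ring).
  assert (e3 : exp ((1 - p) * (2 * u)) = X * / Y)
    by (unfold X, Y, r; rewrite <- exp_Ropp, <- exp_plus; f_equal; ring).
  unfold cosh, sinh in *. rewrite !exp_Ropp in *. fold X Y in hgap |- *.
  rewrite e1, e2, e3.
  (* the denominator of W factors as 2 X (cosh u - cosh (r u)) *)
  assert (hprod : (X * Y - 1) * (X * / Y - 1)
                  = 2 * X * ((X + / X) / 2 - (Y + / Y) / 2))
    by (field; lra).
  assert (X * Y - 1 <> 0 /\ X * / Y - 1 <> 0) as [h1 h2].
  { split; intros h0; apply hgap;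
      apply (Rmult_eq_reg_l (2 * X)); try lra; rewrite <- hprod, h0; ring. }
  replace p with ((r + 1) / 2) by (unfold r; field).
  field. repeat split; try lra.
  - intros h0. apply hgap. apply (Rmult_eq_reg_l (2 * X * Y)); [| nra].
    rewrite Rmult_0_r, <- h0. field. lra.
  - intros h0. apply h2. replace X with Y by lra. field. lra.
Qed.

Theorem theorem2p3 (x p : R) (hx : 0 < x) (hp0 : 0 <= p) (hp1 : p <= 1) :
  WYD p x 1 <= Rpower (Kant x) (p * (1 - p)) * Lmean x 1.
Proof.
  assert (hK : 0 < Kant x) by (unfold Kant; apply Rdiv_lt_0_compat; nra).
  (* endpoints: W_0 = W_1 = L, while the exponent p (1 - p) vanishes *)
  destruct (Req_dec p 0) as [hp | hp0']; [| destruct (Req_dec p 1) as [hp | hp1']].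
  1,2: rewrite WYD_endpoint by tauto;
       replace (p * (1 - p)) with 0 by (rewrite hp; ring);
       rewrite Rpower_O by exact hK; lra.
  (* substitute x = exp (2 u); the exponent becomes (1 - r^2)/4 with r = 2p - 1 *)
  set (u := ln x / 2).
  assert (hxu : x = exp (2 * u))
    by (unfold u; rewrite <- (exp_ln x hx) at 1; f_equal; field).
  clearbody u. subst x.
  destruct (Req_dec u 0) as [-> | hu].
  -
    rewrite Rmult_0_r, exp_0, WYD_diag, Lmean_diag.
    replace (Kant 1) with 1 by (unfold Kant; field).
    rewrite Rpower_base_1. lra.
  - assert (hr : -1 < 2 * p - 1 < 1) by lra.
    pose proof (cosh_gap_pos u (2 * p - 1) hu hr).
    rewrite Kant_exp, WYD_exp by lra.
    rewrite (Rmult_comm (Rpower _ _)).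
    apply Rmult_le_compat_l.
    + left. apply Lmean_pos; [apply exp_pos | lra].
    + apply wyd_ratio_le; assumption.
Qed.
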